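(* For each of the following groups $G$ of order $36$ there exists a $(G,[3,9,24],18)$ Hadamard partitioned difference family: $\mathbb{Z}_6\times\mathbb{Z}_6$, $\mathbb{Z}_3\times\mathbb{Z}_{12}$, $\mathbb{Z}_3\times Q_{12}$, $D_6\times D_6$, $\mathbb{Z}_6\times D_6$.
   Context: For a finite group $G$ (difference of $x$ and $y$ being $x-y$ additively, or $xy^{-1}$ multiplicatively) and $B\subseteq G$, $\Delta B$ is the multiset of differences of ordered pairs of distinct elements of $B$; for $\mathcal{F}=\{B_1,\dots,B_t\}$, $\Delta\mathcal{F}$ is the multiset union of the $\Delta B_i$. $\mathcal{F}$ is a $(G,[k_1,\dots,k_t],\lambda)$ partitioned difference family if the $B_i$ partition $G$, $|B_i|=k_i$, and $\Delta\mathcal{F}$ contains every non-identity element of $G$ exactly $\lambda$ times; it is Hadamard if $|G|=2\lambda$. $D_{2n}=\langle x,y\mid x^n=1,\ y^2=1,\ yx^i=x^{-i}y\rangle$ is the dihedral group of order $2n$ (so $D_6$ has order $6$), and $Q_{4n}=\langle x,y\mid x^{2n}=1,\ y^2=x^n,\ yx^i=x^{-i}y\rangle$ is the dicyclic group of order $4n$ (so $Q_{12}$ has order $12$). *)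

From HB Require Import structures.
From mathcomp Require Import all_boot all_order all_algebra all_fingroup.
From mathcomp Require Import ring.
Set Implicit Arguments. Unset Strict Implicit. Unset Printing Implicit Defensive.
Import GRing.Theory.

Local Open Scope group_scope.

(* The "difference" of x and y is x * y^-1 (multiplicative notation;  *)
(* for the additive groups 'Z_n this is x - y).                       *)

Definition diff_mult (gT : finGroupType) (B : {set gT}) (g : gT) : nat :=
  #|[set p : gT * gT | [&& p.1 \in B, p.2 \in B, p.1 != p.2 & p.1 * p.2^-1 == g]]|.

Definition is_pdf (gT : finGroupType) (G : {group gT}) (ks : seq nat) (lam : nat)
    (F : seq {set gT}) : Prop :=
  [/\ size F = size ks,
   [/\
      (forall i, i < size F -> nth set0 F i \subset G)%N,
      (forall i j, i < size F -> j < size F -> i != j ->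
         [disjoint nth set0 F i & nth set0 F j])%N &
      \bigcup_(B <- F) B = G],
      (forall i, i < size F -> #|nth set0 F i| = nth 0 ks i)%N &
      (forall g, g \in G -> g != 1%g -> (\sum_(B <- F) diff_mult B g)%N = lam)].

Definition is_hadamard_pdf (gT : finGroupType) (G : {group gT}) (ks : seq nat)
    (lam : nat) (F : seq {set gT}) : Prop :=
  is_pdf G ks lam F /\ #|G| = (2 * lam)%N.

(* Concrete groups.  The pair (i, a) : 'Z_m * bool stands for x^i y^a. *)
(* Multiplication:  x^i y^a * x^j y^b = x^(i + (-1)^a j + [a && b] c) y^(a xor b), *)
(* which realises <x, y | x^m = 1, y^2 = x^c, y x^i = x^-i y> when c + c = 0. *)
Section Metacyclic.
Local Open Scope ring_scope.
Variables (m : nat) (c : 'Z_m).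
Hypothesis c2 : c + c = 0.

Definition mc_mul (u v : 'Z_m * bool) : 'Z_m * bool :=
  (u.1 + (if u.2 then - v.1 else v.1) + (if u.2 && v.2 then c else 0), u.2 (+) v.2).
Definition mc_one : 'Z_m * bool := (0, false).
Definition mc_inv (u : 'Z_m * bool) : 'Z_m * bool :=
  if u.2 then (u.1 + c, true) else (- u.1, false).

Lemma cN : - c = c.
Proof. by apply/eqP; rewrite eq_sym -subr_eq0 opprK c2. Qed.

Lemma mc_mulA : associative mc_mul.
Proof.
move=> [i a] [j b] [k d]; rewrite /mc_mul /=.
case: a; case: b; case: d => /=; congr pair;
  rewrite ?opprD ?opprK ?cN; try ring.
Qed.

Lemma mc_mul1 : left_id mc_one mc_mul.
Proof. by move=> [i a]; rewrite /mc_mul /= add0r addr0. Qed.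

Lemma mc_mulV : left_inverse mc_one mc_inv mc_mul.
Proof.
move=> [i [|]]; rewrite /mc_mul /mc_inv /mc_one /=; congr pair.
  by rewrite -c2; ring.
by rewrite addr0 addNr.
Qed.
End Metacyclic.

Local Open Scope ring_scope.
Lemma c0_2 : (0 : 'Z_3) + 0 = 0. Proof. by rewrite addr0. Qed.
Lemma c3_2 : (3%:R : 'Z_6) + 3%:R = 0. Proof. by apply/val_inj. Qed.
Local Close Scope ring_scope.

Definition D6 : Type := ('Z_3 * bool)%type.
HB.instance Definition _ := Finite.copy D6 ('Z_3 * bool)%type.
HB.instance Definition _ :=
  Finite_isGroup.Build D6 (mc_mulA c0_2) (@mc_mul1 3 0%R) (mc_mulV c0_2).

Definition Q12 : Type := ('Z_6 * bool)%type.
HB.instance Definition _ := Finite.copy Q12 ('Z_6 * bool)%type.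
HB.instance Definition _ :=
  Finite_isGroup.Build Q12 (mc_mulA c3_2) (@mc_mul1 6 (3%:R)%R) (mc_mulV c3_2).

From HB Require Import structures.
From mathcomp Require Import all_boot all_order all_algebra all_fingroup.
Set Implicit Arguments. Unset Strict Implicit. Unset Printing Implicit Defensive.

(* Each family is exhibited explicitly: a subgroup of order 3, a block of size 9
   and the complement of their union.  All conditions on a partitioned difference
   family of a finite group are finite, so they are decided by a boolean test over
   an explicit enumeration of the group, proved sound once for all finite groups.
   The Hadamard condition comes for free: the block sizes of a partition of the
   group add up to 36 = 2 * 18. *)

Lemma mem_nth_flatten (T : eqType) (S : seq (seq T)) j x :
  x \in nth [::] S j -> x \in flatten S.
Proof.
elim: S j => [|s S IH] [|j] //= xS; rewrite mem_cat ?xS //.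
by rewrite (IH j xS) orbT.
Qed.

Lemma flatten_uniq_mem (T : eqType) (S : seq (seq T)) s :
  uniq (flatten S) -> s \in S -> uniq s.
Proof.
elim: S => //= s' S IH; rewrite cat_uniq inE => /and3P[us' _ uS].
by case/predU1P => [-> // | /(IH uS)].
Qed.

Lemma disjoint_nth_flatten (T : finType) (S : seq (seq T)) i j :
  uniq (flatten S) -> i != j ->
  [disjoint [set x in nth [::] S i] & [set x in nth [::] S j]].
Proof.
have head_disj s S' k : ~~ has (mem s) (flatten S') ->
    [disjoint [set x in s] & [set x in nth [::] S' k]].
  move/hasPn=> sS'; apply/pred0P=> x /=; rewrite !inE.
  by apply/negbTE/andP=> -[xs /mem_nth_flatten /sS' /negP].
elim: S i j => [|s S IH] [|i] [|j] //=; rewrite ?cat_uniq.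
1-3: by move=> _ _; apply/pred0P=> x; rewrite /= !inE andbF.
- by case/and3P=> _ dS _ _; apply: head_disj.
- by case/and3P=> _ dS _ _; rewrite disjoint_sym; apply: head_disj.
- by case/and3P=> _ _ uS; rewrite eqSS; apply: IH.
Qed.

Lemma bigcup_flatten (T : finType) (S : seq (seq T)) :
  \bigcup_(s <- S) [set x in s] = [set x in flatten S].
Proof.
elim: S => [|s S IH]; first by rewrite big_nil; apply/setP=> x; rewrite !inE.
by rewrite big_cons IH; apply/setP=> x; rewrite !inE mem_cat.
Qed.

Section DifferenceFamilyTest.
Local Open Scope group_scope.
Variable gT : finGroupType.

Definition diff_seq (s : seq gT) : seq gT :=
  [seq p.1 * p.2^-1 | p <- [seq (x, y) | x <- s, y <- s] & p.1 != p.2].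

Lemma diff_mult_seq (s : seq gT) g :
  uniq s -> diff_mult [set x in s] g = count_mem g (diff_seq s).
Proof.
move=> us; set P := fun p : gT * gT => (p.1 != p.2) && (p.1 * p.2^-1 == g).
have pairs_uniq : uniq [seq (x, y) | x <- s, y <- s].
  by apply: allpairs_uniq => // -[? ?] [? ?].
rewrite /diff_seq count_map count_filter.
rewrite (@eq_count _ _ P); last by move=> p; rewrite /= andbC.
rewrite -size_filter -(card_uniqP (filter_uniq P pairs_uniq)) /diff_mult.
apply: eq_card => -[x y]; rewrite !inE mem_filter /P /=.
apply/and4P/andP => [[xs ys xy gxy] | [/andP[xy gxy] /allpairsP[[a b] /= [sa sb]]]].
  by split; [apply/andP | apply: allpairs_f].
by case=> ? ?; subst.
Qed.

Variable elems : seq gT.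
Hypothesis mem_elems : forall x : gT, x \in elems.

Definition pdf_test (ks : seq nat) (lam : nat) (S : seq (seq gT)) : bool :=
  [&& shape S == ks, uniq (flatten S), all (mem (flatten S)) elems &
      all (fun g => (g == 1) || (count_mem g (flatten (map diff_seq S)) == lam)) elems].

Lemma pdf_testP ks lam S : pdf_test ks lam S ->
  is_pdf [set: gT]%G ks lam [seq [set x in s] | s <- S].
Proof.
case/and4P=> /eqP<- uS /allP coverS /allP multS.
have nth_blocks i : nth set0 [seq [set x in s] | s <- S] i = [set x in nth [::] S i].
  case: (ltnP i (size S)) => [iS | Si]; first by rewrite (nth_map [::]).
  by rewrite !nth_default ?size_map //; apply/setP=> x; rewrite !inE.
split; rewrite ?size_map //.
- split=> [i _ | i j _ _ ij | ]; first exact: subsetT.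
    by rewrite !nth_blocks; apply: disjoint_nth_flatten.
  by rewrite big_map bigcup_flatten; apply/setP=> x; rewrite !inE; apply: coverS.
- move=> i iS; rewrite nth_blocks (nth_map [::]) // cardsE.
  by apply/card_uniqP/(flatten_uniq_mem uS)/mem_nth.
- move=> g _ g1; rewrite big_map.
  rewrite (eq_big_seq (fun s => count_mem g (diff_seq s))) => [|s sS]; last first.
    by apply: diff_mult_seq; apply: flatten_uniq_mem sS.
  have := multS g (mem_elems g).
  by rewrite (negbTE g1) count_flatten -map_comp sumnE big_map => /eqP.
Qed.

Lemma hadamard_pdf_testP ks lam S : pdf_test ks lam S -> sumn ks = (2 * lam)%N ->
  is_hadamard_pdf [set: gT]%G ks lam [seq [set x in s] | s <- S].
Proof.
move=> test sum_ks; split; first exact: pdf_testP.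
case/and4P: test => /eqP eq_ks uS /allP coverS _.
rewrite cardsT -sum_ks -eq_ks -size_flatten -(card_uniqP uS).
by apply: eq_card=> x; rewrite [RHS]coverS ?mem_elems.
Qed.

Definition complete_blocks (Bs : seq (seq gT)) : seq (seq gT) :=
  rcons Bs [seq g <- elems | g \notin flatten Bs].

End DifferenceFamilyTest.

Lemma mem_pairs (A B : eqType) (sA : seq A) (sB : seq B) :
  (forall a, a \in sA) -> (forall b, b \in sB) ->
  forall p : A * B, p \in [seq (a, b) | a <- sA, b <- sB].
Proof. by move=> memA memB [a b]; apply: allpairs_f. Qed.

Lemma mem_mkseq_inZp n (x : 'I_n.+1) : x \in mkseq inZp n.+1.
Proof.
apply/mapP; exists (val x); first by rewrite mem_iota ltn_ord.
by apply: val_inj; rewrite /= modn_small.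
Qed.

Lemma mem_bools (b : bool) : b \in [:: false; true].
Proof. by case: b. Qed.

Definition elems_D6 : seq D6 :=
  [seq (i, a) | i <- mkseq inZp 3, a <- [:: false; true]].

Definition elems_Q12 : seq Q12 :=
  [seq (i, a) | i <- mkseq inZp 6, a <- [:: false; true]].

Lemma mem_elems_D6 x : x \in elems_D6.
Proof. exact: (mem_pairs (@mem_mkseq_inZp _) mem_bools (x : _ * bool)). Qed.

Lemma mem_elems_Q12 x : x \in elems_Q12.
Proof. exact: (mem_pairs (@mem_mkseq_inZp _) mem_bools (x : _ * bool)). Qed.

Definition elems_Z6xZ6 : seq ('Z_6 * 'Z_6) :=
  [seq (a, b) | a <- mkseq inZp 6, b <- mkseq inZp 6].

Definition blocks_Z6xZ6 : seq (seq ('Z_6 * 'Z_6)) :=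
  complete_blocks elems_Z6xZ6 (map (map (fun p => (inZp p.1, inZp p.2)))
    [:: [:: (0, 0); (2, 0); (4, 0)];
        [:: (0, 5); (1, 2); (2, 1); (3, 0); (3, 1); (3, 3); (3, 5); (4, 3); (5, 4)]]).

Lemma hadamard_pdf_Z6xZ6 :
  exists F, is_hadamard_pdf [set: 'Z_6 * 'Z_6]%G [:: 3; 9; 24] 18 F.
Proof.
have mem_elems x : x \in elems_Z6xZ6 by apply: mem_pairs; apply: mem_mkseq_inZp.
by eexists; apply: (hadamard_pdf_testP mem_elems (S := blocks_Z6xZ6)); vm_compute.
Qed.

Definition elems_Z3xZ12 : seq ('Z_3 * 'Z_12) :=
  [seq (a, b) | a <- mkseq inZp 3, b <- mkseq inZp 12].

Definition blocks_Z3xZ12 : seq (seq ('Z_3 * 'Z_12)) :=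
  complete_blocks elems_Z3xZ12 (map (map (fun p => (inZp p.1, inZp p.2)))
    [:: [:: (0, 0); (1, 0); (2, 0)];
        [:: (0, 6); (0, 11); (1, 2); (1, 3); (2, 1); (2, 5); (2, 7); (2, 9); (2, 10)]]).

Lemma hadamard_pdf_Z3xZ12 :
  exists F, is_hadamard_pdf [set: 'Z_3 * 'Z_12]%G [:: 3; 9; 24] 18 F.
Proof.
have mem_elems x : x \in elems_Z3xZ12 by apply: mem_pairs; apply: mem_mkseq_inZp.
by eexists; apply: (hadamard_pdf_testP mem_elems (S := blocks_Z3xZ12)); vm_compute.
Qed.

Definition elems_Z3xQ12 : seq ('Z_3 * Q12) :=
  [seq (a, b) | a <- mkseq inZp 3, b <- elems_Q12].

Definition blocks_Z3xQ12 : seq (seq ('Z_3 * Q12)) :=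
  complete_blocks elems_Z3xQ12 (map (map (fun '(i, (j, a)) => (inZp i, (inZp j, a))))
    [:: [:: (0, (0, false)); (1, (0, false)); (2, (0, false))];
        [:: (0, (1, false)); (0, (3, false)); (0, (5, false)); (0, (0, true));
            (0, (1, true)); (1, (2, true)); (1, (5, true)); (2, (3, true));
            (2, (4, true))]]).

Lemma hadamard_pdf_Z3xQ12 :
  exists F, is_hadamard_pdf [set: 'Z_3 * Q12]%G [:: 3; 9; 24] 18 F.
Proof.
have mem_elems x : x \in elems_Z3xQ12.
  exact: (mem_pairs (@mem_mkseq_inZp _) mem_elems_Q12).
by eexists; apply: (hadamard_pdf_testP mem_elems (S := blocks_Z3xQ12)); vm_compute.
Qed.

Definition elems_D6xD6 : seq (D6 * D6) := [seq (a, b) | a <- elems_D6, b <- elems_D6].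

Definition blocks_D6xD6 : seq (seq (D6 * D6)) :=
  complete_blocks elems_D6xD6
    (map (map (fun '((i, a), (j, b)) => ((inZp i, a), (inZp j, b))))
       [:: [:: ((0, false), (0, false)); ((1, false), (0, false)); ((2, false), (0, false))];
           [:: ((0, false), (0, true)); ((1, false), (2, true)); ((2, false), (1, true));
               ((0, true), (1, false)); ((1, true), (2, false)); ((1, true), (0, true));
               ((1, true), (1, true)); ((1, true), (2, true)); ((2, true), (0, false))]]).

Lemma hadamard_pdf_D6xD6 :
  exists F, is_hadamard_pdf [set: D6 * D6]%G [:: 3; 9; 24] 18 F.
Proof.
have mem_elems x : x \in elems_D6xD6 by exact: (mem_pairs mem_elems_D6 mem_elems_D6).
by eexists; apply: (hadamard_pdf_testP mem_elems (S := blocks_D6xD6)); vm_compute.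
Qed.

Definition elems_Z6xD6 : seq ('Z_6 * D6) :=
  [seq (a, b) | a <- mkseq inZp 6, b <- elems_D6].

Definition blocks_Z6xD6 : seq (seq ('Z_6 * D6)) :=
  complete_blocks elems_Z6xD6 (map (map (fun '(i, (j, a)) => (inZp i, (inZp j, a))))
    [:: [:: (0, (0, false)); (2, (0, false)); (4, (0, false))];
        [:: (0, (1, true)); (1, (2, true)); (2, (2, true)); (3, (1, true));
            (4, (0, true)); (5, (0, false)); (5, (1, false)); (5, (2, false));
            (5, (0, true))]]).

Lemma hadamard_pdf_Z6xD6 :
  exists F, is_hadamard_pdf [set: 'Z_6 * D6]%G [:: 3; 9; 24] 18 F.
Proof.
have mem_elems x : x \in elems_Z6xD6.
  exact: (mem_pairs (@mem_mkseq_inZp _) mem_elems_D6).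
by eexists; apply: (hadamard_pdf_testP mem_elems (S := blocks_Z6xD6)); vm_compute.
Qed.

Theorem mainTheorem11 :
  [/\ exists F, is_hadamard_pdf [set: 'Z_6 * 'Z_6]%G [:: 3; 9; 24] 18 F,
      exists F, is_hadamard_pdf [set: 'Z_3 * 'Z_12]%G [:: 3; 9; 24] 18 F,
      exists F, is_hadamard_pdf [set: 'Z_3 * Q12]%G [:: 3; 9; 24] 18 F,
      exists F, is_hadamard_pdf [set: D6 * D6]%G [:: 3; 9; 24] 18 F &
      exists F, is_hadamard_pdf [set: 'Z_6 * D6]%G [:: 3; 9; 24] 18 F].
Proof.
split.
- exact: hadamard_pdf_Z6xZ6.
- exact: hadamard_pdf_Z3xZ12.
- exact: hadamard_pdf_Z3xQ12.
- exact: hadamard_pdf_D6xD6.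
- exact: hadamard_pdf_Z6xD6.
Qed.
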